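(* Let $\mathcal{F}_2=\mathcal{F}_2(L^*,\{d_j^*\}_{j=0}^{L^*+1},s^*,V_{max},\hat{\mathbf G},\kappa)$ be a function class whose sparse ReLU networks have $L^*=O(\log^{\xi^*}n)$ layers, first-layer width $d_1^*\le n^{\alpha^*}$, output dimension $d^*_{L^*+1}=1$, other widths satisfying $m_0+m\le\min_{j\in\{1,\dots,L^*\}}d_j^*\le\max_{j\in\{1,\dots,L^*\}}d_j^*=O(n^{\xi^*})$, and sparsity $s^*\asymp d_1^*\kappa+n^{\alpha^*}\log^{\xi^*}n$, where $0<\alpha^*<1$ and $\xi^*>1$ are constants. Let $N_{\delta,2}$ denote the cardinality of a minimal $\delta$-covering set of $\mathcal{F}_2$ with respect to the $\ell_\infty$ (sup) norm. Then, for $\delta=\frac1n$, $$\log N_{\frac1n,2}\le C_1|\mathcal{A}|\big(n^{\alpha^*}(\log n)^{\xi^*}+d_1^*\kappa\big)(\log n)^{1+\xi^*}$$ for some constant $C_1$.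
   Context: States are $(x,z)$ with $x\in\mathbb{R}^{m_0}$, $z\in\mathbb{R}^m$; $\mathcal{A}$ is a finite action set; $\kappa\le m$; $n$ is the sample size. $\hat{\mathbf G}=\hat U\hat\Sigma\hat U^T=\sum_{k=1}^m\hat\lambda_k\hat U_k\hat U_k^T$ is an estimated covariance matrix of $z$, and $\hat v_\kappa=\begin{pmatrix}I_\kappa&0_{\kappa\times(m-\kappa)}\end{pmatrix}\hat\Sigma^{-1/2}\hat U^Tz$ are the first $\kappa$ principal component scores. $\mathcal{F}_{SReLU}(L,\{d_j\}_{j=0}^{L+1},s,V_{max})$ is the set of $f(x)=W_Lg_{L-1}\circ\cdots\circ g_0(x)$, $g_j(x)=\max(W_jx+v_j,0)$, $W_j\in\mathbb{R}^{d_{j+1}\times d_j}$, all entries of all $W_j,v_j$ in $[-1,1]$, at most $s$ nonzero parameters in total, and $\|f\|_\infty\le V_{max}$. $\mathcal{F}_2(L,\{d_j\},s,V_{max},\hat{\mathbf G},\kappa)$ is the set of functions $(x,z,a)\mapsto f_0(x,\hat v_\kappa,a)$ where, for each $a\in\mathcal{A}$, $f_0(\cdot,a)\in\mathcal{F}_{SReLU}(L,\{d_j\},s,V_{max})$ with input dimension $m_0+\kappa$.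
   Formalization: The sup norm defining $N_{\frac1n,2}$ runs only over states (x,z) in a fixed set where all |xᵢ| and all coordinates of $\hat v_\kappa$ are at most a constant B, and covering functions need not lie in $\mathcal{F}_2$. Apart from conventions, each condition added here is assumed in the paper as well or is needed for the statement above to hold. *)

From HB Require Import structures.
From mathcomp Require Import all_boot all_order all_algebra.
From mathcomp Require Import all_classical all_reals all_analysis.
Set Implicit Arguments. Unset Strict Implicit. Unset Printing Implicit Defensive.
Import Order.TTheory GRing.Theory Num.Theory.
Local Open Scope ring_scope.

Section Defs.
Variable R : realType.

(** Vectors of the (varying) layer widths are encoded
    as [nat -> R], only the first [d j] coordinates being meaningful.
    [W j i k] is entry (i,k) of the weight matrix W_j in R^{d_{j+1} x d_j},
    [v j i] is entry i of the shift vector v_j in R^{d_{j+1}}. *)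

Fixpoint hid (d : nat -> nat) (W : nat -> nat -> nat -> R) (v : nat -> nat -> R)
  (j : nat) (y : nat -> R) : nat -> R :=
  match j with
  | 0 => y
  | j'.+1 => fun i => Num.max (\sum_(k < d j') W j' i k * hid d W v j' y k + v j' i) 0
  end.

(* f(y) = W_L g_{L-1} o ... o g_0 (y), with output dimension d_{L+1} = 1 *)
Definition net_eval (L : nat) (d : nat -> nat) (W : nat -> nat -> nat -> R)
  (v : nat -> nat -> R) (y : nat -> R) : R :=
  \sum_(k < d L) W L 0%N k * hid d W v L y k.

Definition nparams (L : nat) (d : nat -> nat) (W : nat -> nat -> nat -> R)
  (v : nat -> nat -> R) : nat :=
  (\sum_(j < L.+1) \sum_(i < d j.+1) \sum_(k < d j) nat_of_bool (W j i k != 0%R)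
   + \sum_(j < L) \sum_(i < d j.+1) nat_of_bool (v j i != 0%R))%N.

(* F_SReLU(L, {d_j}, s, Vmax) : functions of the input y in R^{d_0}
   (encoded as nat -> R; net_eval only reads coordinates < d 0). *)
Definition F_SReLU (L : nat) (d : nat -> nat) (s : nat) (Vmax : R)
  : set ((nat -> R) -> R) :=
  [set f | exists (W : nat -> nat -> nat -> R) (v : nat -> nat -> R),
     (forall j i k, `|W j i k| <= 1) /\ (forall j i, `|v j i| <= 1) /\
     (nparams L d W v <= s)%N /\
     (forall y, f y = net_eval L d W v y) /\
     (forall y, `|f y| <= Vmax)].

Definition rv2seq (n : nat) (r : 'rV[R]_n) : nat -> R :=
  fun i => match (insub i : option 'I_n) with Some k => r 0 k | None => 0 end.

(* first kappa principal component scores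
   v_kappa = (I_kappa 0) Sigma^{-1/2} U^T z, with Sigma = diag(lam) *)
Definition vhat (m kappa : nat) (hk : (kappa <= m)%N) (U : 'M[R]_m)
  (lam : 'I_m -> R) (z : 'rV[R]_m) : 'rV[R]_kappa :=
  \row_(k < kappa) ((Num.sqrt (lam (widen_ord hk k)))^-1 *
                    (z *m U) 0 (widen_ord hk k)).

Definition F2 (m0 m kappa : nat) (hk : (kappa <= m)%N) (A : finType)
  (L : nat) (d : nat -> nat) (s : nat) (Vmax : R) (U : 'M[R]_m) (lam : 'I_m -> R)
  : set ('rV[R]_m0 * 'rV[R]_m * A -> R) :=
  [set f | exists f0 : A -> (nat -> R) -> R,
     (forall a, F_SReLU L d s Vmax (f0 a)) /\
     (forall x z a, f (x, z, a) = f0 a (rv2seq (row_mx x (vhat hk U lam z))))].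

Definition has_cover (X : Type) (D : set X) (F : set (X -> R)) (delta : R) (k : nat) :=
  exists g : 'I_k -> X -> R,
    forall f, F f -> exists i, forall p, D p -> `|f p - g i p| <= delta.

(* cardinality of a minimal delta-cover (0 if no finite cover exists) *)
Definition covering_number (X : Type) (D : set X) (F : set (X -> R)) (delta : R) : nat :=
  match pselect (exists k, `[< has_cover D F delta k >]) with
  | left h => @ex_minn (fun k => `[< has_cover D F delta k >]) h
  | right _ => 0%N
  end.

End Defs.

From HB Require Import structures.
From mathcomp Require Import all_boot all_order all_algebra.
From mathcomp Require Import all_classical all_reals all_analysis.
From mathcomp Require Import ring lra zify.
Set Implicit Arguments. Unset Strict Implicit. Unset Printing Implicit Defensive.
Import Order.TTheory GRing.Theory Num.Theory.
Local Open Scope ring_scope.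
Local Open Scope classical_set_scope.

(* A network of F_SReLU(L, d, s, Vmax) has at most s nonzero parameters, all in
   [-1, 1].  Rounding them to the grid (1/N)Z turns the network into a "sparse
   code", a list of at most s (position, grid value) pairs, so there are at most
   Q^s codes with Q = O(L W^2 N), W the maximal width.  As the ReLU is
   1-Lipschitz, moving every parameter by at most 1/N moves the output on inputs
   bounded by B by at most (L+1)(W+1)^(L+1) B / N, which is 1/n for
   N = (L+1)(W+1)^(L+1) B n.  One code per action gives a 1/n-cover of F_2 of
   size Q^(s|A|), and log Q = O((log n)^(1+xi)) since L = O((log n)^xi) and
   W = O(n^xi).  The principal component scores matter only through the bound
   B on the network inputs over S. *)

Section ReLU.
Variable R : realDomainType.
Implicit Types a b : R.

Lemma normr_max0_le a : `|Num.max a 0| <= `|a|.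
Proof. by case: (leP a 0) => h; rewrite ?(max_r h) ?(max_l (ltW h)) ?normr0. Qed.

Lemma dist_max0_le a b : `|Num.max a 0 - Num.max b 0| <= `|a - b|.
Proof.
case: (leP a 0) => ha; case: (leP b 0) => hb;
  rewrite ?(max_r ha) ?(max_l (ltW ha)) ?(max_r hb) ?(max_l (ltW hb)).
- by rewrite subrr normr0.
- by rewrite sub0r normrN distrC (gtr0_norm hb) ger0_norm; lra.
- by rewrite subr0 (gtr0_norm ha) ger0_norm; lra.
- by [].
Qed.

End ReLU.

Section Dot.
Variable R : numDomainType.

Lemma norm_sum_le_card n (F : 'I_n -> R) (c : R) :
  (forall k, `|F k| <= c) -> `|\sum_(k < n) F k| <= n%:R * c.
Proof.
move=> Fc; apply: le_trans (ler_norm_sum _ _ _) _.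
by apply: le_trans (ler_sum _ (fun k _ => Fc k)) _; rewrite sumr_const card_ord mulr_natl.
Qed.

Lemma dist_dot_le n (w w' h h' : nat -> R) (eps delta X : R) :
  (forall k, (k < n)%N ->
    [/\ `|w k| <= 1, `|w k - w' k| <= eps, `|h k - h' k| <= delta & `|h' k| <= X]) ->
  `|\sum_(k < n) w k * h k - \sum_(k < n) w' k * h' k| <= n%:R * (delta + eps * X).
Proof.
move=> close; rewrite -sumrB; apply: norm_sum_le_card => k.
have [w1 dw dh h'X] := close k (ltn_ord k).
have -> : w k * h k - w' k * h' k = w k * (h k - h' k) + (w k - w' k) * h' k by ring.
apply: le_trans (ler_normD _ _) _; rewrite !normrM.
by apply: lerD; [rewrite -[delta]mul1r | ]; apply: ler_pM.
Qed.

End Dot.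

Section Perturbation.
Variables (R : realType) (L : nat) (d : nat -> nat) (K Bp : R) (y : nat -> R).
Hypothesis width_le : forall j, (j <= L)%N -> (d j)%:R + 1 <= K.
Hypothesis Bp_ge1 : 1 <= Bp.
Hypothesis y_le : forall k, (k < d 0)%N -> `|y k| <= Bp.

Let scale_ge1 j : 1 <= K ^+ j * Bp.
Proof.
have K_ge1 : 1 <= K by have := width_le (leq0n L); have : 0 <= (d 0)%:R :> R by []; lra.
by rewrite -[1]mulr1; apply: ler_pM => //; apply: exprn_ege1.
Qed.

Lemma norm_hid_le (W : nat -> nat -> nat -> R) (v : nat -> nat -> R) :
  (forall j i k, `|W j i k| <= 1) -> (forall j i, `|v j i| <= 1) ->
  forall j, (j <= L)%N -> forall i, (i < d j)%N -> `|hid d W v j y i| <= K ^+ j * Bp.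
Proof.
move=> W1 v1; elim=> [_ i|j IH jL i _] /=; first by rewrite expr0 mul1r; apply: y_le.
set X := K ^+ j * Bp; have X1 : 1 <= X := scale_ge1 j.
have dK := width_le (ltnW jL).
apply: le_trans (normr_max0_le _) _; apply: le_trans (ler_normD _ _) _.
have : `|\sum_(k < d j) W j i k * hid d W v j y k| <= (d j)%:R * X.
  apply: norm_sum_le_card => k; rewrite normrM -[X]mul1r.
  by apply: ler_pM => //; apply: IH (ltnW jL) _ _.
have := v1 j i; have : 0 <= (d j)%:R :> R by [].
rewrite exprS -mulrA -/X; nra.
Qed.

Variables (W W' : nat -> nat -> nat -> R) (v v' : nat -> nat -> R) (eps : R).
Hypothesis eps_ge0 : 0 <= eps.
Hypotheses (W_le1 : forall j i k, `|W j i k| <= 1) (W'_le1 : forall j i k, `|W' j i k| <= 1).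
Hypothesis v'_le1 : forall j i, `|v' j i| <= 1.
Hypothesis W_close : forall j i k, (j <= L)%N -> (i < d j.+1)%N -> (k < d j)%N ->
  `|W j i k - W' j i k| <= eps.
Hypothesis v_close : forall j i, (j < L)%N -> (i < d j.+1)%N -> `|v j i - v' j i| <= eps.

Lemma dist_hid_le j : (j <= L)%N -> forall i, (i < d j)%N ->
  `|hid d W v j y i - hid d W' v' j y i| <= j%:R * eps * (K ^+ j * Bp).
Proof.
elim: j => [_ i _|j IH jL i ilt] /=; first by rewrite subrr normr0 !mul0r.
set X := K ^+ j * Bp; have X1 : 1 <= X := scale_ge1 j.
have dK := width_le (ltnW jL).
apply: le_trans (dist_max0_le _ _) _; rewrite opprD addrACA.
apply: le_trans (ler_normD _ _) _.
have := @dist_dot_le _ (d j) (W j i) (W' j i) (hid d W v j y) (hid d W' v' j y) eps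
  (j%:R * eps * X) X (fun k kd => And4 (W_le1 j i k) (W_close (ltnW jL) ilt kd)
    (IH (ltnW jL) k kd) (norm_hid_le W'_le1 v'_le1 (ltnW jL) kd)).
have := v_close jL ilt.
have P0 : 0 <= j.+1%:R * eps * X :=
  mulr_ge0 (mulr_ge0 (ler0n _ _) eps_ge0) (le_trans ler01 X1).
have eP : eps <= j.+1%:R * eps * X.
  rewrite -mulrA; apply: le_trans (ler_peMr eps_ge0 X1) (ler_peMl _ _).
  - exact: mulr_ge0 eps_ge0 (le_trans ler01 X1).
  - by rewrite ler1n.
move=> vc dot; apply: le_trans (lerD dot vc) _.
rewrite exprS -(mulrA K) -/X.
set P := j.+1%:R * eps * X in P0 eP *.
have -> : (d j)%:R * (j%:R * eps * X + eps * X) = (d j)%:R * P by rewrite /P -natr1; ring.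
have -> : j.+1%:R * eps * (K * X) = P * K by rewrite /P; ring.
have := ler_wpM2l P0 dK; lra.
Qed.

Lemma dist_net_eval_le : (0 < d L.+1)%N ->
  `|net_eval L d W v y - net_eval L d W' v' y| <= L.+1%:R * eps * (K ^+ L.+1 * Bp).
Proof.
move=> dL; rewrite /net_eval.
set X := K ^+ L * Bp; have X1 : 1 <= X := scale_ge1 L.
have dK := width_le (leqnn L).
have := @dist_dot_le _ (d L) (W L 0%N) (W' L 0%N) (hid d W v L y) (hid d W' v' L y) eps
  (L%:R * eps * X) X (fun k kd => And4 (W_le1 L 0%N k) (W_close (leqnn L) dL kd)
    (dist_hid_le (leqnn L) kd) (norm_hid_le W'_le1 v'_le1 (leqnn L) kd)).
have P0 : 0 <= L.+1%:R * eps * X :=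
  mulr_ge0 (mulr_ge0 (ler0n _ _) eps_ge0) (le_trans ler01 X1).
move=> dot; apply: le_trans dot _.
rewrite exprS -(mulrA K) -/X.
set P := L.+1%:R * eps * X in P0 *.
have -> : (d L)%:R * (L%:R * eps * X + eps * X) = (d L)%:R * P by rewrite /P -natr1; ring.
have -> : L.+1%:R * eps * (K * X) = P * K by rewrite /P; ring.
have := ler_wpM2l P0 dK; lra.
Qed.

End Perturbation.

Section SparseCode.
Variables (R : realType) (L Wm N s : nat).

(* A code lists at most [s] pairs (position, grid value); [(true, j, i, k)] is
   the position of the weight [W j i k] and [(false, j, i, 0)] that of the shift
   [v j i].  Unlisted parameters decode to 0. *)
Definition param_pos := (bool * 'I_L.+1 * 'I_Wm.+1 * 'I_Wm.+1)%type.
Definition grid := 'I_(N.*2).+1.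
Definition sparse_code := {ffun 'I_s -> option (param_pos * grid)}.

Definition grid_val (g : grid) : R := (g%:R - N%:R) / N%:R.
Definition grid_round (w : R) : grid := inord (absz (Num.floor (w * N%:R) + N%:Z)).

Definition code_lookup (c : sparse_code) (p : param_pos) : R :=
  if [pick t | oapp (fun e => e.1 == p) false (c t)] is Some t
  then oapp (fun e => grid_val e.2) 0 (c t) else 0.

Definition code_weight (c : sparse_code) (j i k : nat) : R :=
  if [&& (j <= L)%N, (i <= Wm)%N & (k <= Wm)%N]
  then code_lookup c (true, inord j, inord i, inord k) else 0.

Definition code_shift (c : sparse_code) (j i : nat) : R :=
  if (j <= L)%N && (i <= Wm)%N then code_lookup c (false, inord j, inord i, ord0) else 0.

Definition code_of_seq (ps : seq param_pos) (h : param_pos -> grid) : sparse_code :=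
  [ffun t : 'I_s => nth None [seq Some (p, h p) | p <- ps] t].

Definition code_alphabet : nat := (2 * L.+1 * Wm.+1 * Wm.+1 * (N.*2).+1).+1.

Lemma card_sparse_code : #|sparse_code| = (code_alphabet ^ s)%N.
Proof. by rewrite card_ffun card_option !card_prod card_bool !card_ord. Qed.

Lemma code_lookup_of_seq ps h p : (size ps <= s)%N ->
  code_lookup (code_of_seq ps h) p = if p \in ps then grid_val (h p) else 0.
Proof.
move=> ps_s; rewrite /code_lookup; case: pickP => [t|none].
  rewrite ffunE; case: (ltnP t (size ps)) => [t_ps|ps_t]; last first.
    by rewrite nth_default // size_map.
  rewrite (nth_map p) //= => /eqP nth_t.
  have p_ps : p \in ps by rewrite -nth_t mem_nth.
  by rewrite p_ps nth_t.
case: ifP => // p_ps.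
have idx_s : (index p ps < s)%N by apply: leq_trans ps_s; rewrite index_mem.
by have := none (Ordinal idx_s); rewrite ffunE /= (nth_map p) ?index_mem //= nth_index ?eqxx.
Qed.

Hypothesis N_gt0 : (0 < N)%N.

Lemma norm_grid_val_le1 g : `|grid_val g| <= 1.
Proof.
have N0 : 0 < N%:R :> R by rewrite ltr0n.
rewrite /grid_val normrM normfV (gtr0_norm N0) ler_pdivrMr // mul1r ler_norml.
have : g%:R <= N%:R + N%:R :> R by rewrite -natrD addnn ler_nat -ltnS.
have : 0 <= g%:R :> R by []; lra.
Qed.

Lemma dist_grid_round_le w : `|w| <= 1 -> `|w - grid_val (grid_round w)| <= N%:R^-1.
Proof.
move=> w1; have N0 : 0 < N%:R :> R by rewrite ltr0n.
set f := Num.floor (w * N%:R).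
have /andP[fl fu] := floor_itv (w * N%:R); rewrite -/f in fl fu.
have /andP[wl wu] : - N%:R <= w * N%:R <= N%:R.
  by move: w1; rewrite ler_norml => /andP[? ?]; apply/andP; split; nra.
have f_ge : (- N%:Z <= f)%R by rewrite /f floor_ge_int mulrNz -pmulrn.
have f_le : (f <= N%:Z)%R.
  by rewrite -(ler_int R) -pmulrn; apply: le_trans fl wu.
have round_val : (grid_round w)%:R = (f + N%:Z)%:~R :> R.
  rewrite /grid_round inordK; last by lia.
  by rewrite pmulrn; congr (_%:~R); lia.
rewrite /grid_val round_val rmorphD /= addrK.
rewrite -{1}(mulfK (lt0r_neq0 N0) w) -mulrBl normrM normfV (gtr0_norm N0).
by rewrite ler_pdivrMr // mulVf ?lt0r_neq0 // ger0_norm; lra.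
Qed.

Lemma norm_code_lookup_le1 c p : `|code_lookup c p| <= 1.
Proof.
rewrite /code_lookup; case: pickP => [t _|_]; last by rewrite normr0.
by case: (c t) => [e|] /=; rewrite ?normr0 ?norm_grid_val_le1.
Qed.

Lemma norm_code_weight_le1 c j i k : `|code_weight c j i k| <= 1.
Proof. by rewrite /code_weight; case: ifP; rewrite ?normr0 ?norm_code_lookup_le1. Qed.

Lemma norm_code_shift_le1 c j i : `|code_shift c j i| <= 1.
Proof. by rewrite /code_shift; case: ifP; rewrite ?normr0 ?norm_code_lookup_le1. Qed.

End SparseCode.

Lemma sumn_pair (I J : finType) (F : I * J -> nat) :
  (\sum_(p : I * J) F p = \sum_(i : I) \sum_(j : J) F (i, j))%N.
Proof. by rewrite pair_bigA; apply: eq_bigr => -[]. Qed.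

Lemma sumn_widen n m (F : nat -> nat) : (n <= m)%N ->
  (\sum_(i < m) (if (i < n)%N then F i else 0%N) = \sum_(i < n) F i)%N.
Proof. by move=> nm; rewrite (big_ord_widen m F nm) [RHS]big_mkcond. Qed.

Section Encoding.
Variables (R : realType) (L Wm N s : nat) (d : nat -> nat).
Hypothesis d_le : forall j, (j <= L.+1)%N -> (d j <= Wm)%N.
Variables (W : nat -> nat -> nat -> R) (v : nat -> nat -> R).

Definition active_param (p : param_pos L Wm) : bool :=
  let: (b, j, i, k) := p in
  if b then [&& (i < d j.+1)%N, (k < d j)%N & W j i k != 0]
  else [&& (j < L)%N, (i < d j.+1)%N, k == 0%N :> nat & v j i != 0].

Definition param_value (p : param_pos L Wm) : R :=
  let: (b, j, i, k) := p in if b then W j i k else v j i.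

Lemma card_active_params : #|active_param| = nparams L d W v.
Proof.
rewrite -sum1_card big_mkcond; under eq_bigr => p _ do rewrite unfold_in.
rewrite !sumn_pair big_bool /= /nparams; congr (_ + _)%N.
- apply: eq_bigr => j _.
  have dj1 : (d j.+1 <= Wm.+1)%N by apply: leq_trans (d_le _) _.
  have dj : (d j <= Wm.+1)%N by apply: leq_trans (d_le _) _; rewrite // leqW // -ltnS.
  rewrite -(sumn_widen (fun i => \sum_(k < d j) nat_of_bool (W j i k != 0%R))%N dj1).
  apply: eq_bigr => i _; case: ifP => ilt; last by rewrite big1 // => k _; rewrite ilt.
  rewrite -(sumn_widen (fun k => nat_of_bool (W j i k != 0%R)) dj).
  by apply: eq_bigr => k _; case: (k < d j)%N.
- rewrite -(sumn_widen (fun j => \sum_(i < d j.+1) nat_of_bool (v j i != 0%R))%N (leqnSn L)).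
  apply: eq_bigr => j _.
  case: ifP => jL; last by rewrite big1 // => i _; rewrite big1 // => k _; rewrite jL.
  have dj1 : (d j.+1 <= Wm.+1)%N by apply: leq_trans (d_le _) _.
  rewrite -(sumn_widen (fun i => nat_of_bool (v j i != 0%R)) dj1); apply: eq_bigr => i _.
  rewrite big_ord_recl /= big1 ?addn0; first by case: (i < d j.+1)%N.
  by move=> k _; rewrite andbF.
Qed.

Lemma exists_sparse_code : (0 < N)%N ->
  (forall j i k, `|W j i k| <= 1) -> (forall j i, `|v j i| <= 1) ->
  (nparams L d W v <= s)%N ->
  exists c : sparse_code L Wm N s,
  (forall j i k, (j <= L)%N -> (i < d j.+1)%N -> (k < d j)%N ->
     `|W j i k - code_weight R c j i k| <= N%:R^-1) /\
  (forall j i, (j < L)%N -> (i < d j.+1)%N -> `|v j i - code_shift R c j i| <= N%:R^-1).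
Proof.
move=> N_gt0 W1 v1 ps.
have size_s : (size (enum active_param) <= s)%N
  by rewrite -cardE card_active_params.
have round_le w : `|w| <= 1 ->
    `|w - (if w != 0 then grid_val R (grid_round N w) else 0)| <= N%:R^-1.
  case: eqP => [->|_] w1; first by rewrite subr0 normr0 invr_ge0.
  exact: dist_grid_round_le.
exists (code_of_seq s (enum active_param) (fun p => grid_round N (param_value p))).
split=> [j i k jL ilt klt|j i jL ilt].
- have iW : (i <= Wm)%N by apply: ltnW (leq_trans ilt (d_le _)).
  have kW : (k <= Wm)%N by apply: ltnW (leq_trans klt (d_le _)); rewrite leqW.
  rewrite /code_weight jL iW kW code_lookup_of_seq // mem_enum unfold_in /=.
  by rewrite !inordK ?ltnS // ilt klt; apply: round_le.
- have iW : (i <= Wm)%N by apply: ltnW (leq_trans ilt (d_le (ltnW jL : (j.+1 <= L.+1)%N))).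
  rewrite /code_shift (ltnW jL) iW code_lookup_of_seq // mem_enum unfold_in /=.
  by rewrite !inordK ?ltnS ?(ltnW jL) // jL ilt; apply: round_le.
Qed.

End Encoding.

Section NetworkByCode.
Variables (R : realType) (L Wm N s : nat) (d : nat -> nat) (Vmax : R).
Hypothesis N_gt0 : (0 < N)%N.
Hypothesis d_le : forall j, (j <= L.+1)%N -> (d j <= Wm)%N.
Hypothesis dout_gt0 : (0 < d L.+1)%N.

Lemma exists_code_net_approx (f0 : (nat -> R) -> R) (Bp : R) :
  1 <= Bp -> F_SReLU L d s Vmax f0 ->
  exists c : sparse_code L Wm N s, forall y, (forall k, (k < d 0)%N -> `|y k| <= Bp) ->
    `|f0 y - net_eval L d (code_weight R c) (code_shift R c) y|
      <= L.+1%:R * N%:R^-1 * (Wm.+1%:R ^+ L.+1 * Bp).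
Proof.
move=> Bp1 [W [v [W1 [v1 [ps [f0E _]]]]]].
have [c [Wc vc]] := exists_sparse_code d_le N_gt0 W1 v1 ps.
exists c => y y_le; rewrite f0E.
apply: dist_net_eval_le => //.
- by move=> j jL; rewrite natr1 ler_nat ltnS d_le // leqW.
- exact: norm_code_weight_le1.
- exact: norm_code_shift_le1.
Qed.

End NetworkByCode.

Section Covering.
Variable R : realType.

Lemma has_cover_card (X : Type) (T : finType) (D : set X) (F : set (X -> R))
    (delta : R) (g : T -> X -> R) :
  (forall f, F f -> exists t, forall p, D p -> `|f p - g t p| <= delta) ->
  has_cover D F delta #|T|.
Proof.
move=> approx; exists (fun i => g (enum_val i)) => f /approx [t ft].
by exists (enum_rank t) => p Dp; rewrite enum_rankK; apply: ft.
Qed.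

Lemma covering_number_le (X : Type) (D : set X) (F : set (X -> R)) (delta : R) k :
  has_cover D F delta k -> (covering_number D F delta <= k)%N.
Proof.
move=> cover; rewrite /covering_number; case: pselect => [ex|//].
by case: ex_minnP => c _; apply; apply/asboolP.
Qed.

End Covering.

Lemma ler_ln_nat (R : realType) (a b : nat) : (a <= b)%N -> ln a%:R <= ln b%:R :> R.
Proof.
case: a => [|a] ab; last by rewrite ler_ln ?posrE ?ltr0n ?ler_nat // (leq_trans _ ab).
rewrite [ln 0%:R]ln0 //; case: b ab => [|b] _; first by rewrite ln0.
by apply: ln_ge0; rewrite ler1n.
Qed.

Lemma norm_row_mx_le (R : numDomainType) n1 n2 (x : 'rV[R]_n1) (w : 'rV[R]_n2) (b : R) :
  (forall i, `|x 0 i| <= b) -> (forall i, `|w 0 i| <= b) ->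
  forall i, `|row_mx x w 0 i| <= b.
Proof.
move=> xb wb i; rewrite -[i](@fintype.splitK n1 n2).
by case: (fintype.split i) => j; rewrite ?row_mxEl ?row_mxEr.
Qed.

Lemma norm_rv2seq_le (R : realType) n (r : 'rV[R]_n) (b : R) :
  0 <= b -> (forall i, `|r 0 i| <= b) -> forall k, `|rv2seq r k| <= b.
Proof. by move=> b0 rb k; rewrite /rv2seq; case: insubP => [i _ _|_]; rewrite ?normr0. Qed.

Section CoverF2.
Variables (R : realType) (m0 m kappa : nat) (hk : (kappa <= m)%N) (A : finType).
Variables (L : nat) (d : nat -> nat) (s : nat) (Vmax : R) (U : 'M[R]_m) (lam : 'I_m -> R).
Variables (S : set ('rV[R]_m0 * 'rV[R]_m)) (B : R) (Bn n Wm : nat).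
Hypotheses (Bn_gt0 : (0 < Bn)%N) (n_gt0 : (0 < n)%N) (B_le : B <= Bn%:R).
Hypothesis d_le : forall j, (j <= L.+1)%N -> (d j <= Wm)%N.
Hypothesis dout_gt0 : (0 < d L.+1)%N.
Hypothesis S_bounded : forall x z, S (x, z) ->
  (forall i, `|x 0 i| <= B) /\ (forall k, `|vhat hk U lam z 0 k| <= B).

(* The grid resolution that makes the error bound of [exists_code_net_approx] equal to 1/n. *)
Let N := (L.+1 * Wm.+1 ^ L.+1 * Bn * n)%N.
Let D := [set p : 'rV[R]_m0 * 'rV[R]_m * A | S (p.1.1, p.1.2)].
Let F := @F2 R m0 m kappa hk A L d s Vmax U lam.

Let decode (c : {ffun A -> sparse_code L Wm N s}) (p : 'rV[R]_m0 * 'rV[R]_m * A) : R :=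
  net_eval L d (code_weight R (c p.2)) (code_shift R (c p.2))
    (rv2seq (row_mx p.1.1 (vhat hk U lam p.1.2))).

Lemma has_cover_F2 : has_cover D F n%:R^-1 #|{ffun A -> sparse_code L Wm N s}|.
Proof.
have N_gt0 : (0 < N)%N by rewrite !muln_gt0 expn_gt0 Bn_gt0 n_gt0.
have Bn1 : 1 <= Bn%:R :> R by rewrite ler1n.
have err : L.+1%:R * N%:R^-1 * (Wm.+1%:R ^+ L.+1 * Bn%:R) = n%:R^-1 :> R.
  rewrite /N !natrM natrX; field.
  by rewrite expf_neq0 // addrC natr1 !pnatr_eq0 -!lt0n n_gt0 Bn_gt0.
apply: (has_cover_card (g := decode)) => f [f0 [f0F fE]].
have [c cf0] := fin_all_exists (fun a =>
  exists_code_net_approx N_gt0 d_le dout_gt0 Bn1 (f0F a)).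
exists [ffun a => c a] => -[[x z] a] /= /S_bounded [xB zB].
rewrite fE /decode ffunE -err; apply: cf0 => k _.
apply: norm_rv2seq_le (le_trans ler01 Bn1) _ k.
by apply: norm_row_mx_le => i; apply: le_trans B_le.
Qed.

Lemma covering_F2 : (exists k, has_cover D F n%:R^-1 k) /\
  ln (covering_number D F n%:R^-1)%:R <= #|A|%:R * s%:R * ln (code_alphabet L Wm N)%:R :> R.
Proof.
split; first by exists #|{ffun A -> sparse_code L Wm N s}|; apply: has_cover_F2.
apply: le_trans (ler_ln_nat R (covering_number_le has_cover_F2)) _.
rewrite card_ffun card_sparse_code -expnM natrX lnXn ?ltr0n // -[ln _ *+ _]mulr_natl natrM.
by rewrite [s%:R * _]mulrC.
Qed.

End CoverF2.

Lemma code_alphabet_le (L Wm Bn n : nat) : (0 < Bn)%N -> (0 < n)%N ->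
  (code_alphabet L Wm (L.+1 * Wm.+1 ^ L.+1 * Bn * n)
     <= L.+1 ^ 2 * (7 * Bn * n * Wm.+1) ^ (L + 3))%N.
Proof.
move=> Bn_gt0 n_gt0; set N := (L.+1 * Wm.+1 ^ L.+1 * Bn * n)%N.
have N_gt0 : (0 < N)%N by rewrite !muln_gt0 expn_gt0 Bn_gt0 n_gt0.
apply: (@leq_trans (7 * (L.+1 * Wm.+1 * Wm.+1) * N)).
  rewrite /code_alphabet !mulnA -[(2 * _ * _ * _)%N]mulnA -[(2 * _ * _)%N]mulnA.
  have : (0 < L.+1 * Wm.+1 * Wm.+1)%N by rewrite !muln_gt0.
  move: (L.+1 * Wm.+1 * Wm.+1)%N N_gt0 => a; nia.
have -> : (7 * (L.+1 * Wm.+1 * Wm.+1) * N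
   = L.+1 ^ 2 * (7 * Bn * n * Wm.+1 ^ (L + 3)))%N.
  by rewrite /N expnD expnS; ring.
have base_le : (7 * Bn * n <= (7 * Bn * n) ^ (L + 3))%N.
  by rewrite addn3 expnS leq_pmulr // expn_gt0 !muln_gt0 Bn_gt0 n_gt0.
by rewrite leq_mul2l expnMn leq_mul2r base_le !orbT.
Qed.

Lemma ln_code_alphabet_le (R : realType) (L Wm Bn n : nat) (cL c xi : R) :
  (0 < Bn)%N -> 0 <= cL -> 0 < c -> 1 <= xi -> 1 <= ln n%:R :> R ->
  L%:R <= cL * ln n%:R `^ xi -> Wm.+1%:R <= c * n%:R `^ xi ->
  ln (code_alphabet L Wm (L.+1 * Wm.+1 ^ L.+1 * Bn * n))%:R
    <= (2 * cL + (cL + 3) * (7 * Bn%:R * c + 1 + xi)) * ln n%:R `^ (1 + xi).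
Proof.
move=> Bn_gt0 cL0 c_gt0 xi1 l1 Lb Wb.
have n_gt0 : (0 < n)%N by case: (posnP n) l1 => [->|//]; rewrite ln0 // ler10.
set l := ln n%:R in l1 Lb *; set lam := l `^ xi in Lb *.
have l_lam : l <= lam := le1r_powR l1 xi1.
have lam1 : 1 <= lam := le_trans l1 l_lam.
have lnL : ln L.+1%:R <= cL * lam.
  by apply: le_trans Lb; rewrite -natr1 addrC le_ln1Dx // (lt_le_trans _ (ler0n _ _)).
have X_pos : 0 < (7 * Bn * n * Wm.+1)%:R :> R by rewrite ltr0n !muln_gt0 Bn_gt0 n_gt0.
have lnX : ln (7 * Bn * n * Wm.+1)%:R <= (7 * Bn%:R * c + 1 + xi) * l.
  have C_gt0 : 0 < 7 * Bn%:R * c :> R by rewrite !mulr_gt0 ?ltr0n.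
  have n_pos : 0 < n%:R :> R by rewrite ltr0n.
  have X_le : (7 * Bn * n * Wm.+1)%:R <= 7 * Bn%:R * c * (n%:R * n%:R `^ xi).
    rewrite natrM; have -> : 7 * Bn%:R * c * (n%:R * n%:R `^ xi)
      = (7 * Bn * n)%:R * (c * n%:R `^ xi) :> R by rewrite !natrM; ring.
    by rewrite ler_wpM2l.
  move: (7 * Bn%:R * c) C_gt0 X_le => C C_gt0 X_le.
  apply: le_trans (_ : ln (C * (n%:R * n%:R `^ xi)) <= _).
    by rewrite ler_ln ?posrE // (lt_le_trans X_pos X_le).
  have nx_pos : 0 < n%:R `^ xi :> R by rewrite powR_gt0.
  rewrite lnM ?posrE ?mulr_gt0 // lnM ?posrE // ln_powR -/l.
  have := ln_sublinear C_gt0; have := ler_peMr (ltW C_gt0) l1.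
  lra.
have lnX0 : 0 <= ln (7 * Bn * n * Wm.+1)%:R :> R.
  by apply: ln_ge0; rewrite ler1n !muln_gt0 Bn_gt0 n_gt0.
have L_pos : 0 < L.+1%:R :> R by rewrite ltr0n.
apply: le_trans (ler_ln_nat R (code_alphabet_le L Wm Bn_gt0 n_gt0)) _.
rewrite natrM !natrX lnM ?posrE ?exprn_gt0 // !lnXn //.
have l_pos : 0 < l := lt_le_trans ltr01 l1.
rewrite powRD; last by rewrite lt0r_neq0 ?implybT.
rewrite powRr1 ?(ltW l_pos) // -![ln _ *+ _]mulr_natl -/lam.
have L3 : (L + 3)%:R <= (cL + 3) * lam by rewrite natrD; lra.
have := ler_pM (ler0n _ _) lnX0 L3 lnX.
have := ler_wpM2l cL0 (ler_peMl (le_trans ler01 lam1) l1).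
lra.
Qed.

Lemma leq_max_width (L : nat) (d : nat -> nat) j :
  (j <= L.+1)%N -> (d j <= \max_(i < L.+2) d i)%N.
Proof.
move=> jL.
exact: (@bigop.leq_bigmax _ (fun i : 'I_L.+2 => d i) (Ordinal (jL : (j < L.+2)%N))).
Qed.

Lemma max_width_le (R : realFieldType) (L a : nat) (d : nat -> nat) (b t : R) :
  0 <= b -> 1 <= t -> d 0%N = a -> d L.+1 = 1%N ->
  (forall j, (1 <= j <= L)%N -> (d j)%:R <= b * t) ->
  (\max_(j < L.+2) d j).+1%:R <= ((a + 2)%:R + b) * t.
Proof.
move=> b0 t1 d0 dout dmid.
have [[j /= jL] ->] := @bigop.eq_bigmax _ (fun j : 'I_L.+2 => d j) ltac:(by rewrite card_ord).
have a2t : (a + 2)%:R <= (a + 2)%:R * t by rewrite ler_peMr.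
have bt0 : 0 <= b * t by rewrite mulr_ge0 // (le_trans ler01).
rewrite mulrDl -natr1 natrD; have : 0 <= a%:R :> R by [].
case: (posnP j) => [->|j_gt0]; first by rewrite d0; lra.
case: (eqVneq j L.+1) => [->|jNL]; first by rewrite dout; lra.
have := dmid j; rewrite j_gt0 -ltnS ltn_neqAle jNL -ltnS jL => /(_ isT); lra.
Qed.

Theorem proposition2 (R : realType) (m0 m kappa : nat) (hk : (kappa <= m)%N)
  (A : finType) (Vmax : R) (alpha xi : R)
  (halpha : 0 < alpha < 1) (hxi : 1 < xi) (hV : 0 < Vmax)
  (S : set ('rV[R]_m0 * 'rV[R]_m)) (B : R)
  (cL cW cs1 cs2 : R) (n0 : nat)
  (hc : [/\ 0 < cL, 0 < cW, 0 < cs1 & 0 < cs2])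
  (L : nat -> nat) (d : nat -> nat -> nat) (s : nat -> nat)
  (G U : nat -> 'M[R]_m) (lam : nat -> 'I_m -> R)
  (hL : forall n, (n0 <= n)%N ->
     (1 <= L n)%N /\ (L n)%:R <= cL * (ln n%:R) `^ xi)
  (hd0 : forall n, (n0 <= n)%N -> d n 0%N = (m0 + kappa)%N)
  (hdout : forall n, (n0 <= n)%N -> d n (L n).+1 = 1%N)
  (hd1 : forall n, (n0 <= n)%N -> (d n 1%N)%:R <= n%:R `^ alpha)
  (hdj : forall n j, (n0 <= n)%N -> (1 <= j <= L n)%N ->
     (m0 + m <= d n j)%N /\ (d n j)%:R <= cW * n%:R `^ xi)
  (hs : forall n, (n0 <= n)%N ->
     cs1 * ((d n 1%N * kappa)%:R + n%:R `^ alpha * (ln n%:R) `^ xi) <= (s n)%:R /\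
     (s n)%:R <= cs2 * ((d n 1%N * kappa)%:R + n%:R `^ alpha * (ln n%:R) `^ xi))
  (hG : forall n, (n0 <= n)%N ->
     [/\ (U n)^T *m U n = 1%:M,
         G n = U n *m diag_mx (\row_k lam n k) *m (U n)^T,
         forall k, 0 < lam n k
       & forall k l : 'I_m, (k <= l)%N -> lam n l <= lam n k])
  (hS : forall n, (n0 <= n)%N -> forall x z, S (x, z) ->
     (forall i, `|x 0 i| <= B) /\
     (forall k, `|vhat hk (U n) (lam n) z 0 k| <= B)) :
  exists (C1 : R) (N0 : nat), forall n, (N0 <= n)%N ->
    let F := @F2 R m0 m kappa hk A (L n) (d n) (s n) Vmax (U n) (lam n) in
    let D := [set p : 'rV[R]_m0 * 'rV[R]_m * A | S (p.1.1, p.1.2)] in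
    (exists k, has_cover D F (n%:R^-1) k) /\
    ln (covering_number D F (n%:R^-1))%:R <=
      C1 * #|A|%:R * (n%:R `^ alpha * (ln n%:R) `^ xi + (d n 1%N * kappa)%:R)
         * (ln n%:R) `^ (1 + xi).
Proof.
case: hc => cL_gt0 cW_gt0 _ cs2_gt0.
have [Bn Bn_gt0 B_le] : exists2 Bn : nat, (0 < Bn)%N & B <= Bn%:R.
  by exists (Num.trunc `|B|).+1 => //; apply: le_trans (ler_norm B) (ltW (truncnS_gt _)).
have [Ne e_le] : exists Ne : nat, expR 1 <= Ne%:R :> R.
  by exists (Num.trunc (expR 1 : R)).+1; apply: ltW (truncnS_gt _).
pose c : R := (m0 + kappa + 2)%:R + cW.
pose CQ := 2 * cL + (cL + 3) * (7 * Bn%:R * c + 1 + xi).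
exists (cs2 * CQ), (maxn n0 (maxn Ne 1)) => n; rewrite !geq_max => /and3P[n0n Nen n_gt0] F D.
have l1 : 1 <= ln n%:R :> R.
  rewrite -[leLHS](expRK 1) ler_ln ?posrE ?expR_gt0 ?ltr0n //.
  by apply: le_trans e_le _; rewrite ler_nat.
have nxi1 : 1 <= n%:R `^ xi :> R by rewrite (le_trans _ (le1r_powR _ (ltW hxi))) ?ler1n.
have Wb := max_width_le (ltW cW_gt0) nxi1 (hd0 _ n0n) (hdout _ n0n)
  (fun j jL => (hdj _ j n0n jL).2).
have dout_gt0 : (0 < d n (L n).+1)%N by rewrite hdout.
have [cover cover_le] := covering_F2 A (s n) Vmax Bn_gt0 n_gt0 B_le
  (@leq_max_width _ _) dout_gt0 (hS _ n0n).
split=> //; apply: le_trans cover_le _.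
have lnQ := ln_code_alphabet_le Bn_gt0 (ltW cL_gt0) (ltr_wpDl (ler0n _ _) cW_gt0)
  (ltW hxi) l1 (hL _ n0n).2 Wb.
have [_ s_le] := hs _ n0n; rewrite addrC in s_le.
set Q := ln (code_alphabet _ _ _)%:R in lnQ *.
have Q0 : 0 <= Q by apply: ln_ge0; rewrite ler1n.
set T := _ + _ in s_le *; set P := ln n%:R `^ (1 + xi) in lnQ *.
rewrite (_ : cs2 * CQ * _ * T * P = #|A|%:R * (cs2 * T * (CQ * P))); last by ring.
by rewrite -mulrA ler_wpM2l //; apply: ler_pM.
Qed.
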